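(* Let $S\ge 2$. As $m\to\infty$, $$B(m,m,\dots,m)\sim\frac{S^{Sm+\frac12}}{(2\pi m)^{\frac{S-1}{2}}\,(S-1)^S},$$ where $B$ has $S$ arguments all equal to $m$.
   Context: For positive integers $m_1,\dots,m_S$, $B(m_1,\dots,m_S)=\sum_{\ell_1=0}^{m_1-1}\cdots\sum_{\ell_S=0}^{m_S-1}\frac{(\ell_1+\dots+\ell_S)!}{\ell_1!\cdots\ell_S!}$. *)

From Stdlib Require Import Reals Lra Lia Arith List.
Open Scope R_scope.

Definition multinom (t : list nat) : R :=
  INR (fact (list_sum t)) / fold_right Rmult 1 (map (fun l => INR (fact l)) t).

(* sum_tuples [m_1;...;m_S] f = sum_{l_1=0}^{m_1-1} ... sum_{l_S=0}^{m_S-1} f [l_1;...;l_S] *)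
Fixpoint sum_tuples (ms : list nat) (f : list nat -> R) : R :=
  match ms with
  | nil => f nil
  | m :: ms' =>
      fold_right Rplus 0 (map (fun l => sum_tuples ms' (fun t => f (l :: t))) (seq 0 m))
  end.

Definition B (ms : list nat) : R := sum_tuples ms multinom.

(* Write d = S and M(t) = (t_1 + ... + t_d)! / (t_1! ... t_d!).  We factor
   B(m,...,m) = Q(m) * M(m,...,m), Q(m) = sum over the box 0 <= t_i < m of M(t)/M(m,...,m),
   and prove the two limits separately.

   - Wallis integrals give n * W(2n)^2 -> pi/4; with elementary bounds on ln this yields
     Stirling's formula ln n! = n ln n - n + ln(2 pi n)/2 + o(1), hence the asymptotics
     M(m,...,m) ~ d^(dm+1/2) / (2 pi m)^((d-1)/2) of the central multinomial coefficient.
   - For a tuple of deficit n = sum_i (m - t_i), factorial ratios squeeze M(t)/M(m,...,m)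
     around prod_i d^-(m - t_i) when n is bounded, while raising a minimal entry shows
     M(t) <= 3/2 (2/3)^n M(m,...,m) in general.  Summing over the box (the sums factorise)
     bounds Q(m), for every truncation level K, between powers of geometric sums, and a
     double limit (m, then K) gives Q(m) -> (sum_(k>=1) d^-k)^d = (d - 1)^-d. *)

From Stdlib Require Import Reals Lra Lia Arith List.
From Coquelicot Require Import Coquelicot.
Open Scope R_scope.

Definition W (n : nat) : R := RInt (fun x => sin x ^ n) 0 (PI / 2).

Lemma continuous_sin_pow (n : nat) (x : R) : continuous (fun y => sin y ^ n) x.
Proof. apply continuity_pt_filterlim. reg. Qed.

Lemma W_correct (n : nat) : is_RInt (fun x => sin x ^ n) 0 (PI / 2) (W n).
Proof.
  apply (RInt_correct (V := R_CompleteNormedModule)), ex_RInt_continuous.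
  intros x _; apply continuous_sin_pow.
Qed.

(* Integration by parts, in the form: the derivative of -cos x sin^(n+1) x is
   (n+2) sin^(n+2) x - (n+1) sin^n x, and it vanishes at both ends. *)
Lemma W_rec (n : nat) : INR (n + 2) * W (n + 2) = INR (n + 1) * W n.
Proof.
  set (g := fun x => INR (n + 2) * sin x ^ (n + 2) - INR (n + 1) * sin x ^ n).
  assert (Hg : is_RInt g 0 (PI / 2)
                 (minus (- cos (PI / 2) * sin (PI / 2) ^ (n + 1)) (- cos 0 * sin 0 ^ (n + 1)))).
  { apply (is_RInt_derive (V := R_CompleteNormedModule) (fun x => - cos x * sin x ^ (n + 1))).
    - intros x _. auto_derive; [easy|]. unfold g.
      replace (n + 1)%nat with (S n) by lia. replace (n + 2)%nat with (S (S n)) by lia.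
      rewrite !S_INR. simpl. pose proof (sin2 x) as Hsc. unfold Rsqr in Hsc.
      replace (- cos x * (1 * cos x * ((INR n + 1) * sin x ^ n)))
        with (- (cos x * cos x) * ((INR n + 1) * sin x ^ n)) by ring.
      replace (cos x * cos x) with (1 - sin x * sin x) by lra. ring.
    - intros x _. apply continuity_pt_filterlim. unfold g. reg. }
  rewrite cos_PI2, sin_0, pow_i in Hg by lia.
  replace (minus (- 0 * sin (PI / 2) ^ (n + 1)) (- cos 0 * 0)) with 0 in Hg
    by (unfold minus, plus, opp; simpl; ring).
  assert (Hd := is_RInt_minus _ _ 0 (PI / 2) _ _
                  (is_RInt_scal _ 0 (PI / 2) (INR (n + 2)) _ (W_correct (n + 2)))
                  (is_RInt_scal _ 0 (PI / 2) (INR (n + 1)) _ (W_correct n))).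
  apply (is_RInt_ext _ g) in Hd; [|reflexivity].
  assert (E := is_RInt_unique _ _ _ _ Hg).
  rewrite (is_RInt_unique _ _ _ _ Hd) in E.
  unfold minus, plus, opp, scal in E; simpl in E; unfold mult in E; simpl in E. lra.
Qed.

Lemma W0 : W 0 = PI / 2.
Proof. unfold W. simpl. rewrite RInt_const. unfold scal; simpl. unfold mult; simpl. lra. Qed.

Lemma W1 : W 1 = 1.
Proof.
  assert (H : is_RInt (fun x => sin x ^ 1) 0 (PI / 2) (minus (- cos (PI / 2)) (- cos 0))).
  { apply (is_RInt_derive (V := R_CompleteNormedModule) (fun x => - cos x)).
    - intros x _. auto_derive; [easy|]. ring.
    - intros x _. apply continuous_sin_pow. }
  unfold W. rewrite (is_RInt_unique _ _ _ _ H), cos_PI2, cos_0.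
  unfold minus, plus, opp; simpl. ring.
Qed.

(* Since 0 <= sin <= 1 on [0, pi/2], the integrals decrease with n. *)
Lemma W_decr (n : nat) : W (S n) <= W n.
Proof.
  pose proof PI_RGT_0.
  apply RInt_le; [lra | | |].
  1, 2: apply (ex_RInt_continuous (V := R_CompleteNormedModule)); intros x _;
        apply continuous_sin_pow.
  intros x Hx. simpl.
  assert (0 <= sin x) by (apply sin_ge_0; lra).
  assert (sin x <= 1) by apply (proj2 (SIN_bound x)).
  assert (0 <= sin x ^ n) by (apply pow_le; lra).
  nra.
Qed.

Lemma W_pos (n : nat) : 0 < W n.
Proof.
  induction n as [n IH] using (well_founded_induction Wf_nat.lt_wf).
  destruct n as [|[|n]].
  - rewrite W0. pose proof PI_RGT_0. lra.
  - rewrite W1. lra.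
  - replace (S (S n)) with (n + 2)%nat by lia.
    assert (0 < W n) by (apply IH; lia).
    assert (0 < INR (n + 2)) by (apply lt_0_INR; lia).
    assert (0 < INR (n + 1)) by (apply lt_0_INR; lia).
    pose proof (W_rec n). nra.
Qed.

(* (n+1) W(n+1) W n is invariant under the recursion, hence equal to its value at 0. *)
Lemma W_prod (n : nat) : INR (n + 1) * W (n + 1) * W n = PI / 2.
Proof.
  induction n as [|n IH].
  - simpl. rewrite W0, W1. lra.
  - replace (S n + 1)%nat with (n + 2)%nat by lia. replace (S n) with (n + 1)%nat by lia.
    rewrite W_rec, <- IH. ring.
Qed.

Lemma W_even (n : nat) : W (2 * n) = PI / 2 * INR (fact (2 * n)) / (4 ^ n * INR (fact n) ^ 2).
Proof.
  induction n as [|n IH].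
  - simpl. rewrite W0. lra.
  - replace (2 * S n)%nat with (2 * n + 2)%nat by lia.
    assert (0 < INR (2 * n + 2)) by (apply lt_0_INR; lia).
    apply (Rmult_eq_reg_l (INR (2 * n + 2))); [|lra]. rewrite W_rec, IH.
    replace (2 * n + 2)%nat with (S (S (2 * n))) by lia.
    rewrite !fact_simpl, !mult_INR. replace (S n) with (n + 1)%nat by lia.
    replace (2 * n + 1)%nat with (S (2 * n)) by lia.
    rewrite !S_INR, mult_INR, pow_add, plus_INR. simpl (INR 2). simpl (INR 1). simpl (4 ^ 1).
    assert (INR (fact n) <> 0) by apply INR_fact_neq_0.
    assert (0 <= INR n) by apply pos_INR.
    field. repeat split; try lra. apply pow_nonzero. lra.
Qed.

(* Sandwich W(2n+1) <= W(2n) <= W(2n-1) combined with W_prod. *)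
Lemma W_even_sq_bounds (n : nat) : (1 <= n)%nat ->
  PI / (2 * (2 * INR n + 1)) <= W (2 * n) ^ 2 <= PI / (4 * INR n).
Proof.
  intros Hn.
  assert (Hn' : 1 <= INR n) by (apply (le_INR 1); lia).
  pose proof (W_pos (2 * n)). pose proof (W_decr (2 * n)) as D1.
  pose proof (W_decr (2 * n - 1)) as D2.
  replace (S (2 * n - 1)) with (2 * n)%nat in D2 by lia.
  assert (P1 : W (2 * n + 1) * W (2 * n) = PI / (2 * (2 * INR n + 1))).
  { replace (PI / (2 * (2 * INR n + 1))) with (PI / 2 / (2 * INR n + 1)) by (field; lra).
    rewrite <- (W_prod (2 * n)), plus_INR, mult_INR. simpl. field. lra. }
  assert (P2 : W (2 * n) * W (2 * n - 1) = PI / (4 * INR n)).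
  { replace (PI / (4 * INR n)) with (PI / 2 / (2 * INR n)) by (field; lra).
    rewrite <- (W_prod (2 * n - 1)). replace (2 * n - 1 + 1)%nat with (2 * n)%nat by lia.
    rewrite mult_INR. simpl. field. lra. }
  replace (S (2 * n)) with (2 * n + 1)%nat in D1 by lia.
  rewrite <- P1, <- P2. replace (W (2 * n) ^ 2) with (W (2 * n) * W (2 * n)) by ring.
  split; [apply Rmult_le_compat_r | apply Rmult_le_compat_l]; lra.
Qed.

Lemma is_lim_seq_inv_INR : is_lim_seq (fun n => / INR n) 0.
Proof.
  replace (Finite 0) with (Rbar_inv p_infty) by reflexivity.
  apply is_lim_seq_inv; [apply is_lim_seq_INR | discriminate].
Qed.

Lemma wallis_limit : is_lim_seq (fun n => INR n * W (2 * n) ^ 2) (PI / 4).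
Proof.
  pose proof PI_RGT_0.
  apply is_lim_seq_le_le_loc with (u := fun n => PI / 4 - PI / 8 * / INR n)
                                  (w := fun _ => PI / 4).
  - exists 1%nat. intros n Hn. pose proof (W_even_sq_bounds n Hn) as [Lo Up].
    assert (1 <= INR n) by (apply (le_INR 1); lia).
    split.
    + apply Rle_trans with (INR n * (PI / (2 * (2 * INR n + 1)))); [|nra].
      apply (Rmult_le_reg_r (8 * INR n * (2 * INR n + 1))); [nra|].
      field_simplify; [|lra|lra]. nra.
    + apply Rle_trans with (INR n * (PI / (4 * INR n))); [nra|].
      right. field. lra.
  - replace (Finite (PI / 4)) with (Finite (PI / 4 - PI / 8 * 0)) by (f_equal; ring).
    apply is_lim_seq_minus'; [apply is_lim_seq_const|].
    apply (is_lim_seq_scal_l _ (PI / 8) 0), is_lim_seq_inv_INR.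
  - apply is_lim_seq_const.
Qed.

(* Stirling's formula in logarithmic form: st n = ln n! + n - (n + 1/2) ln n tends to
   ln(2 pi)/2.  Elementary bounds on ln(1 + 1/n) show that st is decreasing with summable
   decrements, hence convergent; Wallis' product identifies the limit. *)

Lemma nonneg_deriv_ge (f df : R -> R) (y : R) :
  1 <= y ->
  (forall x, 1 <= x -> is_derive f x (df x)) ->
  (forall x, 1 <= x -> 0 <= df x) ->
  f 1 <= f y.
Proof.
  intros Hy Hd Hp.
  destruct (Req_dec y 1) as [->|Hne]; [lra|].
  destruct (MVT_gen f 1 y df) as [c [Hc E]].
  - intros x Hx. apply Hd. rewrite Rmin_left in Hx by lra. lra.
  - intros x Hx. rewrite Rmin_left in Hx by lra.
    apply continuity_pt_filterlim, (ex_derive_continuous (V := R_NormedModule)).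
    exists (df x). apply Hd. lra.
  - rewrite Rmin_left, Rmax_right in Hc by lra.
    assert (0 <= df c) by (apply Hp; lra).
    assert (0 <= df c * (y - 1)) by (apply Rmult_le_pos; lra). lra.
Qed.

(* Two-sided bounds on ln y for y >= 1, applied below with y = 1 + 1/n. *)
Lemma ln_lower (y : R) : 1 <= y -> 2 * (y - 1) / (y + 1) <= ln y.
Proof.
  intros Hy.
  enough (ln 1 - 2 * (1 - 1) / (1 + 1) <= ln y - 2 * (y - 1) / (y + 1))
    by (rewrite ln_1 in *; unfold Rdiv in *; lra).
  apply (nonneg_deriv_ge (fun x => ln x - 2 * (x - 1) / (x + 1))
           (fun x => (x - 1) ^ 2 / (x * (x + 1) ^ 2))); [exact Hy | |].
  - intros x Hx. auto_derive; [repeat split; lra|]. field. lra.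
  - intros x Hx. apply Rmult_le_pos; [apply pow2_ge_0|].
    apply Rlt_le, Rinv_0_lt_compat, Rmult_lt_0_compat; [lra | apply pow_lt; lra].
Qed.

Lemma ln_upper (y : R) : 1 <= y -> ln y <= (y * y - 1) / (2 * y).
Proof.
  intros Hy.
  enough ((1 * 1 - 1) / (2 * 1) - ln 1 <= (y * y - 1) / (2 * y) - ln y)
    by (rewrite ln_1 in *; unfold Rdiv in *; lra).
  apply (nonneg_deriv_ge (fun x => (x * x - 1) / (2 * x) - ln x)
           (fun x => (x - 1) ^ 2 / (2 * x ^ 2))); [exact Hy | |].
  - intros x Hx. auto_derive; [repeat split; lra|]. field. lra.
  - intros x Hx. apply Rmult_le_pos; [apply pow2_ge_0|].
    apply Rlt_le, Rinv_0_lt_compat, Rmult_lt_0_compat; [lra | apply pow_lt; lra].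
Qed.

Definition st (n : nat) : R := ln (INR (fact n)) + INR n - (INR n + / 2) * ln (INR n).

Lemma INR_fact_pos (n : nat) : 0 < INR (fact n).
Proof. apply lt_0_INR, lt_O_fact. Qed.

Lemma ln_fact (n : nat) : ln (INR (fact n)) = st n - INR n + (INR n + / 2) * ln (INR n).
Proof. unfold st. ring. Qed.

Lemma st_step (n : nat) : (1 <= n)%nat ->
  st n - st (S n) = (INR n + / 2) * ln (INR (S n) / INR n) - 1.
Proof.
  intros Hn. unfold st.
  assert (0 < INR n) by (apply lt_0_INR; lia).
  assert (0 < INR (S n)) by (apply lt_0_INR; lia).
  rewrite fact_simpl, mult_INR, ln_mult, ln_div by auto using INR_fact_pos.
  rewrite S_INR. ring.
Qed.

Lemma st_step_bounds (n : nat) : (1 <= n)%nat ->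
  0 <= st n - st (S n) <= / (2 * INR n) - / (2 * INR (S n)).
Proof.
  intros Hn. rewrite st_step by exact Hn.
  assert (Hx : 1 <= INR n) by (apply (le_INR 1); lia).
  rewrite S_INR. set (x := INR n) in *.
  assert (Hy : 1 <= (x + 1) / x) by (apply (Rmult_le_reg_r x); [lra|]; field_simplify; lra).
  pose proof (ln_lower _ Hy) as L. pose proof (ln_upper _ Hy) as U.
  replace (2 * ((x + 1) / x - 1) / ((x + 1) / x + 1)) with (2 / (2 * x + 1)) in L
    by (field; lra).
  replace (((x + 1) / x * ((x + 1) / x) - 1) / (2 * ((x + 1) / x)))
    with ((2 * x + 1) / (2 * x * (x + 1))) in U by (field; lra).
  assert (P : 0 <= x + / 2) by lra.
  split.
  - pose proof (Rmult_le_compat_l _ _ _ P L) as A.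
    replace ((x + / 2) * (2 / (2 * x + 1))) with 1 in A by (field; lra). lra.
  - pose proof (Rmult_le_compat_l _ _ _ P U) as A.
    replace ((x + / 2) * ((2 * x + 1) / (2 * x * (x + 1))))
      with (1 + / (4 * x * (x + 1))) in A by (field; lra).
    replace (/ (2 * x) - / (2 * (x + 1))) with (/ (2 * x * (x + 1))) by (field; lra).
    assert (/ (4 * x * (x + 1)) <= / (2 * x * (x + 1)))
      by (apply Rinv_le_contravar; [apply Rmult_lt_0_compat|]; nra).
    lra.
Qed.

(* st decreases from n = 1 on and stays above st 1 - 1/2, so it converges. *)
Lemma st_converges : exists sigma : R, is_lim_seq st sigma.
Proof.
  assert (Hlb : forall k, st 1 - / 2 + / (2 * INR (S k)) <= st (S k)).
  { induction k as [|k IH].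
    - simpl. lra.
    - pose proof (st_step_bounds (S k) ltac:(lia)). lra. }
  destruct (ex_finite_lim_seq_decr (fun k => st (S k)) (st 1 - / 2)) as [sigma Hs].
  - intros k. pose proof (st_step_bounds (S k) ltac:(lia)). lra.
  - intros k. specialize (Hlb k).
    assert (0 < / (2 * INR (S k))).
    { apply Rinv_0_lt_compat. pose proof (lt_0_INR (S k) ltac:(lia)). lra. }
    lra.
  - exists sigma. apply is_lim_seq_incr_1. exact Hs.
Qed.

Lemma ln_wallis_st (n : nat) : (1 <= n)%nat ->
  ln (INR n * W (2 * n) ^ 2) = 2 * ln (PI / 2) + ln 2 + 2 * (st (2 * n) - 2 * st n).
Proof.
  intros Hn. pose proof PI_RGT_0.
  assert (0 < INR n) by (apply lt_0_INR; lia).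
  pose proof (W_pos (2 * n)). pose proof (INR_fact_pos (2 * n)). pose proof (INR_fact_pos n).
  assert (0 < 4 ^ n) by (apply pow_lt; lra).
  rewrite ln_mult, ln_pow, W_even by (try apply pow_lt; lra).
  rewrite ln_div, !ln_mult, ln_pow, ln_pow by (try apply Rmult_lt_0_compat;
    try apply Rdiv_lt_0_compat; try apply pow_lt; lra).
  rewrite !ln_fact, mult_INR. simpl (INR 2).
  rewrite ln_mult by lra. replace 4 with (2 * 2) by ring. rewrite ln_mult by lra.
  replace (ln (1 + 1)) with (ln 2) by (f_equal; ring). field.
Qed.

(* Stirling's formula; the limit is identified by taking logarithms in Wallis' product. *)
Lemma stirling : is_lim_seq st (ln (2 * PI) / 2).
Proof.
  pose proof PI_RGT_0.
  destruct st_converges as [sigma Hs].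
  assert (H2n : is_lim_seq (fun n => st (2 * n)) sigma).
  { apply (is_lim_seq_subseq st sigma (fun n => 2 * n)%nat); [|exact Hs].
    apply eventually_subseq. intros; lia. }
  assert (Hlim : is_lim_seq (fun n => ln (INR n * W (2 * n) ^ 2))
                   (2 * ln (PI / 2) + ln 2 + 2 * (sigma - 2 * sigma))).
  { apply (is_lim_seq_ext_loc
             (fun n => 2 * ln (PI / 2) + ln 2 + 2 * (st (2 * n) - 2 * st n))).
    - exists 1%nat. intros n Hn. symmetry. apply ln_wallis_st, Hn.
    - apply is_lim_seq_plus'; [apply is_lim_seq_const|].
      apply (is_lim_seq_scal_l _ 2 (sigma - 2 * sigma)), is_lim_seq_minus'; [exact H2n|].
      apply (is_lim_seq_scal_l _ 2 sigma), Hs. }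
  assert (Hwal : is_lim_seq (fun n => ln (INR n * W (2 * n) ^ 2)) (ln (PI / 4))).
  { apply (is_lim_seq_continuous ln), wallis_limit.
    apply continuity_pt_filterlim, continuous_ln. lra. }
  pose proof (is_lim_seq_unique _ _ Hlim) as E1. rewrite (is_lim_seq_unique _ _ Hwal) in E1.
  injection E1 as E1.
  replace (ln (2 * PI) / 2) with sigma; [exact Hs|].
  rewrite ln_mult, (ln_div PI 2), (ln_div PI 4) in * by lra.
  replace 4 with (2 * 2) in E1 by ring. rewrite ln_mult in E1 by lra. lra.
Qed.

Definition sumL (g : nat -> R) (L : list nat) : R := fold_right Rplus 0 (map g L).
Definition prodR (g : nat -> R) (t : list nat) : R := fold_right Rmult 1 (map g t).

Lemma sumL_le (g1 g2 : nat -> R) (L : list nat) :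
  (forall l, In l L -> g1 l <= g2 l) -> sumL g1 L <= sumL g2 L.
Proof.
  unfold sumL. induction L as [|a L IH]; intros H; simpl; [lra|].
  apply Rplus_le_compat; [apply H; simpl; auto|]. apply IH. intros; apply H; simpl; auto.
Qed.

Lemma sumL_ext (g1 g2 : nat -> R) (L : list nat) :
  (forall l, In l L -> g1 l = g2 l) -> sumL g1 L = sumL g2 L.
Proof. intros H. unfold sumL. f_equal. apply map_ext_in, H. Qed.

Lemma sumL_scal (c : R) (g : nat -> R) (L : list nat) :
  sumL (fun l => g l * c) L = sumL g L * c.
Proof. unfold sumL. induction L as [|a L IH]; simpl; [ring|]. rewrite IH. ring. Qed.

Lemma sumL_app (g : nat -> R) (L1 L2 : list nat) :
  sumL g (L1 ++ L2) = sumL g L1 + sumL g L2.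
Proof. unfold sumL. rewrite map_app, fold_right_app. induction L1; simpl; lra. Qed.

Lemma sumL_seq_shift (g : nat -> R) (a K : nat) :
  sumL g (seq a K) = sumL (fun j => g (a + j)%nat) (seq 0 K).
Proof.
  unfold sumL. rewrite <- (Nat.add_0_r a) at 1. generalize 0%nat as b.
  induction K as [|K IH]; intros b; simpl; [reflexivity|].
  rewrite <- IH, Nat.add_succ_r. reflexivity.
Qed.

Lemma prodR_pos (g : nat -> R) (t : list nat) : (forall l, 0 < g l) -> 0 < prodR g t.
Proof.
  intros H. unfold prodR. induction t; simpl; [lra|]. apply Rmult_lt_0_compat; auto.
Qed.

Lemma prodR_app (g : nat -> R) (a b : list nat) : prodR g (a ++ b) = prodR g a * prodR g b.
Proof. unfold prodR. induction a as [|x a IH]; simpl; [ring|]. rewrite IH. ring. Qed.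

Lemma prodR_cons (g : nat -> R) (x : nat) (t : list nat) : prodR g (x :: t) = g x * prodR g t.
Proof. reflexivity. Qed.

Lemma prodR_repeat (g : nat -> R) (m d : nat) : prodR g (repeat m d) = g m ^ d.
Proof. unfold prodR. induction d as [|d IH]; simpl; [ring|]. rewrite IH. ring. Qed.

Lemma prodR_ext (g1 g2 : nat -> R) (t : list nat) :
  (forall l, In l t -> g1 l = g2 l) -> prodR g1 t = prodR g2 t.
Proof. intros H. unfold prodR. f_equal. apply map_ext_in, H. Qed.

Lemma prodR_nonneg (g : nat -> R) (t : list nat) :
  (forall l, In l t -> 0 <= g l) -> 0 <= prodR g t.
Proof.
  unfold prodR. induction t as [|a t IH]; intros H; simpl; [lra|].
  apply Rmult_le_pos; [apply H; simpl; auto|]. apply IH. intros; apply H; simpl; auto.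
Qed.

Lemma prodR_le (g1 g2 : nat -> R) (t : list nat) :
  (forall l, In l t -> 0 <= g1 l <= g2 l) -> prodR g1 t <= prodR g2 t.
Proof.
  induction t as [|a t IH]; intros H; [unfold prodR; simpl; lra|].
  rewrite !prodR_cons. assert (Ha := H a (or_introl eq_refl)).
  apply Rmult_le_compat; try lra.
  - apply prodR_nonneg. intros l Hl. apply H. simpl; auto.
  - apply IH. intros; apply H; simpl; auto.
Qed.

Lemma prodR_zero (g : nat -> R) (t : list nat) (l : nat) :
  In l t -> g l = 0 -> prodR g t = 0.
Proof.
  unfold prodR. induction t as [|a t IH]; simpl; [tauto|]. intros [->|H] E.
  - rewrite E; ring.
  - rewrite IH; auto; ring.
Qed.

Lemma prodR_div (c : R) (h : nat -> R) (t : list nat) :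
  (forall l, 0 < h l) -> prodR (fun l => c / h l) t = c ^ length t / prodR h t.
Proof.
  intros H. induction t as [|a t IH]; [unfold prodR; simpl; field|].
  rewrite !prodR_cons, IH. simpl. pose proof (H a). pose proof (prodR_pos h t H).
  field. lra.
Qed.

Lemma list_sum_le (t : list nat) (m : nat) :
  List.Forall (fun l => (l <= m)%nat) t -> (list_sum t <= length t * m)%nat.
Proof. intros H; induction H; simpl; lia. Qed.

Definition deficit (m : nat) (t : list nat) : nat := (length t * m - list_sum t)%nat.

Lemma prodR_pow_deficit (c : R) (m : nat) (t : list nat) :
  List.Forall (fun l => (l <= m)%nat) t -> prodR (fun l => c ^ (m - l)) t = c ^ deficit m t.
Proof.
  unfold deficit. intros H. induction H as [|l t Hl Ht IH]; unfold prodR in *; simpl.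
  - reflexivity.
  - rewrite IH, <- pow_add. f_equal. pose proof (list_sum_le t m Ht). lia.
Qed.

Lemma sum_tuples_le (ms : list nat) (f g : list nat -> R) :
  (forall t, Forall2 (fun l m => (l < m)%nat) t ms -> f t <= g t) ->
  sum_tuples ms f <= sum_tuples ms g.
Proof.
  revert f g. induction ms as [|m ms IH]; intros f g H; simpl.
  - apply H. constructor.
  - apply (sumL_le (fun l => sum_tuples ms (fun t => f (l :: t)))
                   (fun l => sum_tuples ms (fun t => g (l :: t)))).
    intros l Hl. apply in_seq in Hl. apply IH. intros t Ht. apply H. constructor; auto. lia.
Qed.

Lemma sum_tuples_ext (ms : list nat) (f g : list nat -> R) :
  (forall t, f t = g t) -> sum_tuples ms f = sum_tuples ms g.
Proof.
  intros H. apply Rle_antisym; apply sum_tuples_le; intros t _; rewrite H; lra.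
Qed.

Lemma sum_tuples_scal (ms : list nat) (c : R) (f : list nat -> R) :
  sum_tuples ms (fun t => f t * c) = sum_tuples ms f * c.
Proof.
  revert f. induction ms as [|m ms IH]; intros f; simpl; [ring|].
  change (sumL (fun l => sum_tuples ms (fun t => f (l :: t) * c)) (seq 0 m) =
          sumL (fun l => sum_tuples ms (fun t => f (l :: t))) (seq 0 m) * c).
  rewrite <- sumL_scal. apply sumL_ext. intros l _. apply IH.
Qed.

Lemma sum_tuples_plus (ms : list nat) (f g : list nat -> R) :
  sum_tuples ms (fun t => f t + g t) = sum_tuples ms f + sum_tuples ms g.
Proof.
  revert f g. induction ms as [|m ms IH]; intros f g; simpl; [ring|].
  induction (seq 0 m) as [|l L IHL]; simpl; [ring|]. rewrite IHL, IH. ring.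
Qed.

Lemma sum_tuples_prod (ms : list nat) (g : nat -> R) :
  sum_tuples ms (prodR g) = prodR (fun m => sumL g (seq 0 m)) ms.
Proof.
  revert g. induction ms as [|m ms IH]; intros g; [reflexivity|].
  change (sumL (fun l => sum_tuples ms (fun t => prodR g (l :: t))) (seq 0 m) =
          prodR (fun m => sumL g (seq 0 m)) (m :: ms)).
  rewrite prodR_cons, <- IH, <- sumL_scal.
  apply sumL_ext. intros l _. rewrite Rmult_comm, <- sum_tuples_scal.
  apply sum_tuples_ext. intros t. rewrite prodR_cons. ring.
Qed.

Lemma sum_tuples_prod_repeat (m d : nat) (g : nat -> R) :
  sum_tuples (repeat m d) (prodR g) = sumL g (seq 0 m) ^ d.
Proof.
  rewrite sum_tuples_prod, (prodR_repeat (fun m => sumL g (seq 0 m))). reflexivity.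
Qed.

Lemma multinom_prodR (t : list nat) :
  multinom t = INR (fact (list_sum t)) / prodR (fun l => INR (fact l)) t.
Proof. reflexivity. Qed.

Lemma multinom_pos (t : list nat) : 0 < multinom t.
Proof.
  rewrite multinom_prodR. apply Rdiv_lt_0_compat; [apply INR_fact_pos|].
  apply prodR_pos. intros; apply INR_fact_pos.
Qed.

Lemma list_sum_repeat (m d : nat) : list_sum (repeat m d) = (d * m)%nat.
Proof. induction d; simpl; lia. Qed.

Lemma multinom_repeat (m d : nat) :
  multinom (repeat m d) = INR (fact (d * m)) / INR (fact m) ^ d.
Proof. rewrite multinom_prodR, list_sum_repeat, prodR_repeat. reflexivity. Qed.

(* Its logarithm is st(dm) - d st m + (d-1)/2 ln(2 pi) up to the explicit main terms,
   and st(dm) - d st m -> (1 - d) ln(2 pi)/2 by Stirling. *)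
Lemma central_multinom_asymptotic (d : nat) : (1 <= d)%nat ->
  is_lim_seq (fun m => multinom (repeat m d) * Rpower (2 * PI * INR m) ((INR d - 1) / 2)
                       / Rpower (INR d) (INR (d * m) + / 2)) 1.
Proof.
  intros Hd. pose proof PI_RGT_0.
  assert (HdR : 1 <= INR d) by (apply (le_INR 1); lia).
  set (G := fun m => st (d * m) - INR d * st m + (INR d - 1) / 2 * ln (2 * PI)).
  assert (HG : is_lim_seq G 0).
  { replace (Finite 0) with (Finite (ln (2 * PI) / 2 - INR d * (ln (2 * PI) / 2)
                                     + (INR d - 1) / 2 * ln (2 * PI))) by (f_equal; field).
    apply is_lim_seq_plus'; [|apply is_lim_seq_const].
    apply is_lim_seq_minus'; [|apply (is_lim_seq_scal_l _ (INR d) (ln (2 * PI) / 2)), stirling].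
    apply (is_lim_seq_subseq st _ (fun m => d * m)%nat); [|exact stirling].
    apply eventually_subseq. intros; nia. }
  replace (Finite 1) with (Finite (exp 0)) by (rewrite exp_0; reflexivity).
  apply (is_lim_seq_ext_loc (fun m => exp (G m))).
  - exists 1%nat. intros m Hm.
    assert (0 < INR m) by (apply lt_0_INR; lia).
    pose proof (INR_fact_pos (d * m)). pose proof (INR_fact_pos m).
    assert (0 < INR (fact m) ^ d) by (apply pow_lt; lra).
    assert (Hln : G m = ln (multinom (repeat m d)) + (INR d - 1) / 2 * ln (2 * PI * INR m)
                        - (INR (d * m) + / 2) * ln (INR d)).
    { unfold G. rewrite multinom_repeat, ln_div, ln_pow, !ln_fact, mult_INR by (lra || nia).
      rewrite (ln_mult (INR d) (INR m)), (ln_mult (2 * PI) (INR m)) by lra. field. }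
    rewrite Hln. unfold Rpower, Rminus. pose proof (multinom_pos (repeat m d)).
    rewrite !exp_plus, exp_Ropp, exp_ln by lra. field. apply Rgt_not_eq, exp_pos.
  - apply (is_lim_seq_continuous exp); [apply derivable_continuous_pt, derivable_pt_exp|].
    exact HG.
Qed.

Lemma fact_ratio_bounds (a b : nat) : (a <= b)%nat ->
  INR (S a) ^ (b - a) <= INR (fact b) / INR (fact a) <= INR b ^ (b - a).
Proof.
  intros Hab. destruct (Nat.le_exists_sub a b Hab) as [n [-> _]].
  rewrite Nat.add_sub, Nat.add_comm. clear Hab. pose proof (INR_fact_pos a).
  induction n as [|n IH].
  - rewrite Nat.add_0_r. simpl. replace (INR (fact a) / INR (fact a)) with 1 by (field; lra).
    lra.
  - replace (a + S n)%nat with (S (a + n)) by lia.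
    rewrite fact_simpl, mult_INR.
    replace (INR (S (a + n)) * INR (fact (a + n)) / INR (fact a))
      with (INR (S (a + n)) * (INR (fact (a + n)) / INR (fact a))) by (field; lra).
    assert (INR (S a) <= INR (S (a + n))) by (apply le_INR; lia).
    assert (INR (a + n) <= INR (S (a + n))) by (apply le_INR; lia).
    pose proof (pos_INR (S a)). pose proof (pos_INR (a + n)).
    split; rewrite <- !tech_pow_Rmult.
    + apply Rmult_le_compat; try lra. apply pow_le; lra.
    + apply Rmult_le_compat_l; [lra|]. eapply Rle_trans; [apply IH|].
      apply pow_incr. lra.
Qed.

Lemma inv_fact_ratio_bounds (a b : nat) : (a <= b)%nat ->
  / INR b ^ (b - a) <= INR (fact a) / INR (fact b) <= / INR (S a) ^ (b - a).
Proof.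
  intros Hab. pose proof (fact_ratio_bounds a b Hab) as [Lo Up].
  pose proof (INR_fact_pos a). pose proof (INR_fact_pos b).
  assert (0 < INR (S a) ^ (b - a)) by (apply pow_lt, lt_0_INR; lia).
  replace (INR (fact a) / INR (fact b)) with (/ (INR (fact b) / INR (fact a))) by (field; lra).
  split; apply Rinv_le_contravar; auto; apply Rdiv_lt_0_compat; lra.
Qed.

Lemma multinom_ratio (m : nat) (t : list nat) :
  multinom t = multinom (repeat m (length t)) * prodR (fun l => INR (fact m) / INR (fact l)) t
               * (INR (fact (list_sum t)) / INR (fact (length t * m))).
Proof.
  rewrite prodR_div by (intros; apply INR_fact_pos).
  rewrite multinom_repeat, multinom_prodR.
  pose proof (prodR_pos (fun l => INR (fact l)) t (fun l => INR_fact_pos l)).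
  pose proof (INR_fact_pos m). pose proof (INR_fact_pos (length t * m)).
  assert (0 < INR (fact m) ^ length t) by (apply pow_lt; lra).
  field. lra.
Qed.

Lemma multinom_ratio_lower (m K : nat) (t : list nat) :
  (0 < length t * m)%nat -> List.Forall (fun l => (m - K <= l <= m)%nat) t ->
  (INR (m - K) / INR (length t * m)) ^ deficit m t * multinom (repeat m (length t))
  <= multinom t.
Proof.
  intros Hpos Ht. set (d := length t).
  assert (Hle : List.Forall (fun l => (l <= m)%nat) t) by (eapply Forall_impl; [|exact Ht]; simpl; lia).
  assert (0 < INR (d * m)) by (apply lt_0_INR; exact Hpos).
  pose proof (multinom_pos (repeat m d)).
  assert (Hfac : INR (m - K) ^ deficit m t <= prodR (fun l => INR (fact m) / INR (fact l)) t).
  { rewrite <- prodR_pow_deficit by exact Hle. apply prodR_le.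
    intros l Hl. rewrite Forall_forall in Ht. specialize (Ht l Hl).
    pose proof (fact_ratio_bounds l m ltac:(lia)) as [Lo _].
    split; [apply pow_le, pos_INR|]. eapply Rle_trans; [|exact Lo].
    apply pow_incr. split; [apply pos_INR | apply le_INR; lia]. }
  assert (Hsum : / INR (d * m) ^ deficit m t
                 <= INR (fact (list_sum t)) / INR (fact (d * m))).
  { pose proof (list_sum_le t m Hle).
    apply (inv_fact_ratio_bounds (list_sum t) (d * m) ltac:(lia)). }
  rewrite (multinom_ratio m t). fold d.
  replace ((INR (m - K) / INR (d * m)) ^ deficit m t)
    with (INR (m - K) ^ deficit m t * / INR (d * m) ^ deficit m t)
    by (unfold Rdiv; rewrite Rpow_mult_distr, pow_inv; reflexivity).
  replace (multinom (repeat m d) * prodR (fun l => INR (fact m) / INR (fact l)) t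
           * (INR (fact (list_sum t)) / INR (fact (d * m))))
    with (INR (fact (list_sum t)) / INR (fact (d * m))
          * prodR (fun l => INR (fact m) / INR (fact l)) t * multinom (repeat m d)) by ring.
  apply Rmult_le_compat_r; [lra|]. rewrite Rmult_comm.
  apply Rmult_le_compat; auto; [|apply pow_le, pos_INR].
  apply Rlt_le, Rinv_0_lt_compat, pow_lt. lra.
Qed.

Lemma multinom_ratio_upper (m K : nat) (t : list nat) :
  (K < length t * m)%nat -> List.Forall (fun l => (l <= m)%nat) t -> (deficit m t <= K)%nat ->
  multinom t
  <= (INR m / INR (length t * m - K)) ^ deficit m t * multinom (repeat m (length t)).
Proof.
  intros HK Hle Hn. set (d := length t).
  assert (0 < INR (d * m - K)) by (apply lt_0_INR; lia).
  pose proof (multinom_pos (repeat m d)).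
  assert (Hfac : prodR (fun l => INR (fact m) / INR (fact l)) t <= INR m ^ deficit m t).
  { rewrite <- prodR_pow_deficit by exact Hle. apply prodR_le.
    intros l Hl. rewrite Forall_forall in Hle. specialize (Hle l Hl).
    pose proof (fact_ratio_bounds l m Hle) as [Lo Up].
    split; [|exact Up]. eapply Rle_trans; [|exact Lo]. apply pow_le, pos_INR. }
  assert (Hfac0 : 0 <= prodR (fun l => INR (fact m) / INR (fact l)) t).
  { apply prodR_nonneg. intros l _. apply Rlt_le, Rdiv_lt_0_compat; apply INR_fact_pos. }
  assert (Hsum : INR (fact (list_sum t)) / INR (fact (d * m))
                 <= / INR (d * m - K) ^ deficit m t).
  { pose proof (list_sum_le t m Hle).
    pose proof (inv_fact_ratio_bounds (list_sum t) (d * m) ltac:(lia)) as [_ Up].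
    eapply Rle_trans; [exact Up|]. apply Rinv_le_contravar; [apply pow_lt; lra|].
    apply pow_incr. split; [lra|]. apply le_INR. unfold deficit in Hn. fold d in Hn. lia. }
  assert (Hsum0 : 0 <= INR (fact (list_sum t)) / INR (fact (d * m))).
  { apply Rlt_le, Rdiv_lt_0_compat; apply INR_fact_pos. }
  rewrite (multinom_ratio m t). fold d.
  replace ((INR m / INR (d * m - K)) ^ deficit m t)
    with (INR m ^ deficit m t * / INR (d * m - K) ^ deficit m t)
    by (unfold Rdiv; rewrite Rpow_mult_distr, pow_inv; reflexivity).
  replace (multinom (repeat m d) * prodR (fun l => INR (fact m) / INR (fact l)) t
           * (INR (fact (list_sum t)) / INR (fact (d * m))))
    with (prodR (fun l => INR (fact m) / INR (fact l)) t
          * (INR (fact (list_sum t)) / INR (fact (d * m))) * multinom (repeat m d)) by ring.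
  apply Rmult_le_compat_r; [lra|]. apply Rmult_le_compat; auto.
Qed.

Lemma multinom_raise (a b : list nat) (x : nat) :
  multinom (a ++ S x :: b) * INR (S x)
  = multinom (a ++ x :: b) * INR (S (list_sum (a ++ x :: b))).
Proof.
  rewrite !multinom_prodR, !prodR_app, !prodR_cons.
  replace (list_sum (a ++ S x :: b)) with (S (list_sum (a ++ x :: b)))
    by (rewrite !list_sum_app; simpl; lia).
  rewrite (fact_simpl x), (fact_simpl (list_sum (a ++ x :: b))), !mult_INR.
  pose proof (prodR_pos _ a (fun l => INR_fact_pos l)).
  pose proof (prodR_pos _ b (fun l => INR_fact_pos l)).
  pose proof (INR_fact_pos x). pose proof (lt_0_INR (S x) ltac:(lia)).
  field. repeat split; lra.
Qed.

Lemma min_split (t : list nat) : t <> nil ->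
  exists a x b, t = a ++ x :: b /\ forall y, In y t -> (x <= y)%nat.
Proof.
  induction t as [|y t IH]; intros H; [congruence|].
  destruct t as [|z t'].
  - exists nil, y, nil. split; [reflexivity|]. intros w [->|[]]. lia.
  - destruct IH as [a [x [b [E Hm]]]]; [congruence|].
    destruct (le_lt_dec y x) as [Hyx|Hxy].
    + exists nil, y, (z :: t'). split; [reflexivity|].
      intros w [->|Hw]; [lia|]. specialize (Hm w Hw). lia.
    + exists (y :: a), x, b. split; [rewrite E; reflexivity|].
      intros w [->|Hw]; [lia|]. auto.
Qed.

Lemma list_sum_ge_min (t : list nat) (x : nat) :
  (forall y, In y t -> (x <= y)%nat) -> (length t * x <= list_sum t)%nat.
Proof.
  induction t as [|y t IH]; intros H; simpl; [lia|].
  assert (x <= y)%nat by (apply H; simpl; auto).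
  assert (length t * x <= list_sum t)%nat by (apply IH; intros; apply H; simpl; auto).
  lia.
Qed.

Lemma deficit_zero_repeat (m : nat) (t : list nat) :
  List.Forall (fun l => (l <= m)%nat) t -> deficit m t = 0%nat -> t = repeat m (length t).
Proof.
  unfold deficit. intros Ht; induction Ht as [|y t Hy Ht IH]; simpl; intros E; [reflexivity|].
  pose proof (list_sum_le t m Ht). assert (y = m) by lia. subst. f_equal. apply IH. lia.
Qed.

Lemma multinom_zero (t : list nat) : list_sum t = 0%nat -> multinom t = 1.
Proof.
  intros E. rewrite multinom_prodR, E.
  replace (prodR (fun l => INR (fact l)) t) with 1; [simpl; field|].
  induction t as [|a t IH]; [reflexivity|].
  simpl in E. assert (a = 0%nat) by lia. subst. rewrite prodR_cons, <- IH by lia. simpl. ring.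
Qed.

(* Raising a minimal entry of a nonzero tuple with at least two entries multiplies M by at
   least 3/2, since then 3 (x + 1) <= 2 (sum t + 1). *)
Lemma multinom_raise_min (a b : list nat) (x : nat) :
  (2 <= length (a ++ x :: b))%nat -> (1 <= list_sum (a ++ x :: b))%nat ->
  (forall y, In y (a ++ x :: b) -> (x <= y)%nat) ->
  multinom (a ++ x :: b) <= 2 / 3 * multinom (a ++ S x :: b).
Proof.
  intros Hlen Hsum Hmin. set (t := a ++ x :: b) in *.
  pose proof (list_sum_ge_min t x Hmin).
  assert (Hr : (3 * S x <= 2 * S (list_sum t))%nat) by nia.
  apply le_INR in Hr. rewrite !mult_INR in Hr. simpl (INR 3) in Hr. simpl (INR 2) in Hr.
  pose proof (multinom_raise a b x) as E. fold t in E.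
  pose proof (multinom_pos t). pose proof (multinom_pos (a ++ S x :: b)).
  pose proof (lt_0_INR (S x) ltac:(lia)). pose proof (lt_0_INR (S (list_sum t)) ltac:(lia)).
  apply (Rmult_le_reg_r (INR (S (list_sum t)))); [lra|]. rewrite <- E. nra.
Qed.

Lemma multinom_deficit_decay (m n : nat) (t : list nat) :
  (2 <= length t)%nat -> List.Forall (fun l => (l <= m)%nat) t -> (1 <= list_sum t)%nat ->
  deficit m t = n -> multinom t <= (2 / 3) ^ n * multinom (repeat m (length t)).
Proof.
  revert t. induction n as [|n IH]; intros t Hlen Ht Hsum Hn.
  - rewrite <- (deficit_zero_repeat m t Ht Hn). simpl. lra.
  - assert (Hne : t <> nil) by (intros ->; simpl in Hsum; lia).
    destruct (min_split t Hne) as [a [x [b [-> Hmin]]]].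
    pose proof (list_sum_ge_min _ x Hmin). unfold deficit in Hn.
    assert (Hxm : (x < m)%nat) by (destruct (le_lt_dec m x); [nia | assumption]).
    set (t' := a ++ S x :: b).
    assert (Hlen' : length t' = length (a ++ x :: b)) by (unfold t'; rewrite !length_app; reflexivity).
    assert (Hsum' : list_sum t' = S (list_sum (a ++ x :: b)))
      by (unfold t'; rewrite !list_sum_app; simpl; lia).
    assert (Ht' : List.Forall (fun l => (l <= m)%nat) t').
    { rewrite Forall_forall in *. intros w Hw. unfold t' in Hw.
      apply in_app_or in Hw. destruct Hw as [Hw|[<-|Hw]]; [| lia |]; apply Ht, in_or_app; simpl; auto. }
    assert (IH' := IH t' ltac:(lia) Ht' ltac:(lia) ltac:(unfold deficit; lia)).
    rewrite Hlen' in IH'.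
    pose proof (multinom_raise_min a b x Hlen Hsum Hmin) as Hraise. fold t' in Hraise.
    rewrite <- tech_pow_Rmult. pose proof (multinom_pos t').
    assert (0 <= (2 / 3) ^ n) by (apply pow_le; lra). nra.
Qed.

(* Every tuple with entries at most m (and at least two of them) satisfies
   M(t) <= 3/2 (2/3)^deficit M(m,...,m); the zero tuple is compared with (1,0,...,0). *)
Lemma multinom_dominated (m : nat) (t : list nat) :
  (2 <= length t)%nat -> (1 <= m)%nat -> List.Forall (fun l => (l <= m)%nat) t ->
  multinom t <= 3 / 2 * (2 / 3) ^ deficit m t * multinom (repeat m (length t)).
Proof.
  intros Hlen Hm Ht. set (d := length t) in *. pose proof (multinom_pos (repeat m d)).
  assert (0 <= (2 / 3) ^ deficit m t) by (apply pow_le; lra).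
  destruct (le_lt_dec 1 (list_sum t)) as [Hs|Hs].
  - pose proof (multinom_deficit_decay m _ t Hlen Ht Hs eq_refl) as D. fold d in D. nra.
  - assert (E0 : list_sum t = 0%nat) by lia.
    set (e := 1%nat :: repeat 0%nat (d - 1)).
    assert (Hle : length e = d) by (unfold e; simpl; rewrite repeat_length; lia).
    assert (Hse : list_sum e = 1%nat) by (unfold e; simpl; rewrite list_sum_repeat; lia).
    assert (He : List.Forall (fun l => (l <= m)%nat) e).
    { unfold e. constructor; [lia|]. apply Forall_forall. intros w Hw.
      apply repeat_spec in Hw. lia. }
    pose proof (multinom_deficit_decay m _ e ltac:(lia) He ltac:(lia) eq_refl) as De.
    assert (Me : multinom e = 1).
    { rewrite multinom_prodR, Hse. unfold e. rewrite prodR_cons, prodR_repeat. simpl.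
      rewrite pow1. field. }
    rewrite (multinom_zero t E0). unfold deficit in *. rewrite Hle, Me, Hse in De. fold d. rewrite E0.
    replace (d * m - 0)%nat with (S (d * m - 1)) by nia.
    rewrite <- tech_pow_Rmult. lra.
Qed.

(* geom_sum c K = c + c^2 + ... + c^K, indexed as in a box sum over l < K. *)
Definition geom_sum (c : R) (K : nat) : R := sumL (fun l => c ^ (K - l)) (seq 0 K).

Lemma geom_sum_S (c : R) (K : nat) : geom_sum c (S K) = c * (geom_sum c K + 1).
Proof.
  unfold geom_sum. rewrite seq_S, sumL_app. simpl (0 + K)%nat.
  replace (sumL (fun l => c ^ (S K - l)) (K :: nil)) with c
    by (unfold sumL; cbn [map fold_right]; replace (S K - K)%nat with 1%nat by lia; ring).
  rewrite (sumL_ext _ (fun l => c ^ (K - l) * c)), sumL_scal; [ring|].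
  intros l Hl. apply in_seq in Hl. rewrite Nat.sub_succ_l by lia. simpl. ring.
Qed.

Lemma geom_sum_nonneg (c : R) (K : nat) : 0 <= c -> 0 <= geom_sum c K.
Proof.
  intros Hc. induction K as [|K IH]; [unfold geom_sum, sumL; simpl; lra|].
  rewrite geom_sum_S. apply Rmult_le_pos; lra.
Qed.

Lemma geom_sum_closed (c : R) (K : nat) : c <> 1 -> geom_sum c K = c * (1 - c ^ K) / (1 - c).
Proof.
  intros Hc. induction K as [|K IH].
  - unfold geom_sum, sumL. simpl. field. lra.
  - rewrite geom_sum_S, IH. simpl. field. lra.
Qed.

Lemma geom_sum_bound (c : R) (K : nat) : 0 <= c < 1 -> geom_sum c K <= c / (1 - c).
Proof.
  intros Hc. rewrite geom_sum_closed by lra. unfold Rdiv.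
  apply Rmult_le_compat_r; [apply Rlt_le, Rinv_0_lt_compat; lra|].
  assert (0 <= c ^ K) by (apply pow_le; lra). nra.
Qed.

Lemma geom_sum_truncated (c : R) (m K : nat) : (K <= m)%nat ->
  sumL (fun l => if (m - K <=? l)%nat then c ^ (m - l) else 0) (seq 0 m) = geom_sum c K.
Proof.
  intros HK.
  replace (seq 0 m) with (seq 0 (m - K) ++ seq (m - K) K)
    by (rewrite <- seq_app; f_equal; lia).
  rewrite sumL_app, (sumL_ext _ (fun _ => 0 * 0) (seq 0 (m - K))), sumL_scal, Rmult_0_r,
    Rplus_0_l.
  2: { intros l Hl. apply in_seq in Hl. destruct (Nat.leb_spec (m - K) l); [lia | ring]. }
  rewrite sumL_seq_shift. apply sumL_ext. intros j Hj. apply in_seq in Hj.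
  destruct (Nat.leb_spec (m - K) (m - K + j)); [f_equal | ]; lia.
Qed.

Lemma box_repeat (m d : nat) (t : list nat) :
  Forall2 (fun l m => (l < m)%nat) t (repeat m d) ->
  length t = d /\ List.Forall (fun l => (l <= m)%nat) t.
Proof.
  revert t. induction d as [|d IH]; intros t H; inversion H; subst; [split; auto|].
  destruct (IH _ H4). split; [simpl; auto | constructor; [lia | auto]].
Qed.

Lemma tuple_lower (d m K : nat) (t : list nat) :
  (1 <= d)%nat -> (1 <= m)%nat ->
  Forall2 (fun l m => (l < m)%nat) t (repeat m d) ->
  prodR (fun l => if (m - K <=? l)%nat then (INR (m - K) / INR (d * m)) ^ (m - l) else 0) t
  * multinom (repeat m d) <= multinom t.
Proof.
  intros Hd Hm Hbox. destruct (box_repeat _ _ _ Hbox) as [Hlen Ht]. subst d.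
  pose proof (multinom_pos t). pose proof (multinom_pos (repeat m (length t))).
  destruct (Forall_dec (fun l => (m - K <= l)%nat) (fun l => le_dec (m - K) l) t)
    as [Hall|Hsome].
  - rewrite Forall_forall in Hall.
    rewrite (prodR_ext _ (fun l => (INR (m - K) / INR (length t * m)) ^ (m - l))).
    2: { intros l Hl. specialize (Hall l Hl).
         destruct (Nat.leb_spec (m - K) l); [reflexivity | lia]. }
    rewrite prodR_pow_deficit by exact Ht.
    apply multinom_ratio_lower; [nia|].
    rewrite Forall_forall in *. intros l Hl. specialize (Hall l Hl). specialize (Ht l Hl). lia.
  - apply neg_Forall_Exists_neg in Hsome; [|intros l; apply le_dec].
    apply Exists_exists in Hsome. destruct Hsome as [l [Hl Hlt]].
    rewrite (prodR_zero _ t l Hl); [lra|].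
    destruct (Nat.leb_spec (m - K) l); [contradiction | reflexivity].
Qed.

(* Tuple-wise upper bound: small deficits (at most K) are controlled by
   multinom_ratio_upper with y = m/(dm - K), large ones by the (2/3)^deficit domination,
   split as (8/9)^deficit (3/4)^deficit with (8/9)^deficit <= (8/9)^K. *)
Lemma tuple_upper (d m K : nat) (t : list nat) :
  (2 <= d)%nat -> (1 <= m)%nat -> (K < m)%nat ->
  Forall2 (fun l m => (l < m)%nat) t (repeat m d) ->
  multinom t <= (prodR (fun l => (INR m / INR (d * m - K)) ^ (m - l)) t
                 + 3 / 2 * (8 / 9) ^ K * prodR (fun l => (3 / 4) ^ (m - l)) t)
                * multinom (repeat m d).
Proof.
  intros Hd Hm HK Hbox. destruct (box_repeat _ _ _ Hbox) as [Hlen Ht]. subst d.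
  rewrite !prodR_pow_deficit by exact Ht. set (n := deficit m t).
  pose proof (multinom_pos (repeat m (length t))).
  assert (0 < INR (length t * m - K)) by (apply lt_0_INR; nia).
  assert (0 <= (INR m / INR (length t * m - K)) ^ n)
    by (apply pow_le, Rlt_le, Rdiv_lt_0_compat; [apply lt_0_INR|]; lia || lra).
  assert (0 <= (3 / 4) ^ n) by (apply pow_le; lra).
  assert (0 <= (8 / 9) ^ K) by (apply pow_le; lra).
  destruct (le_lt_dec n K) as [HnK|HnK].
  - pose proof (multinom_ratio_upper m K t ltac:(nia) Ht HnK) as U. fold n in U.
    assert (0 <= 3 / 2 * (8 / 9) ^ K * (3 / 4) ^ n) by (apply Rmult_le_pos; lra).
    nra.
  - pose proof (multinom_dominated m t ltac:(lia) Hm Ht) as D. fold n in D.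
    replace ((2 / 3) ^ n) with ((8 / 9) ^ n * (3 / 4) ^ n) in D
      by (rewrite <- Rpow_mult_distr; f_equal; field).
    assert ((8 / 9) ^ n <= (8 / 9) ^ K).
    { replace n with (K + (n - K))%nat by lia. rewrite pow_add.
      assert ((8 / 9) ^ (n - K) <= 1) by (rewrite <- (pow1 (n - K)); apply pow_incr; lra).
      assert (0 <= (8 / 9) ^ (n - K)) by (apply pow_le; lra). nra. }
    assert ((8 / 9) ^ n * (3 / 4) ^ n <= (8 / 9) ^ K * (3 / 4) ^ n)
      by (apply Rmult_le_compat_r; lra).
    nra.
Qed.

Definition Q (d m : nat) : R := B (repeat m d) / multinom (repeat m d).

Lemma Q_lower (d m K : nat) : (1 <= d)%nat -> (1 <= m)%nat -> (K <= m)%nat ->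
  geom_sum (INR (m - K) / INR (d * m)) K ^ d <= Q d m.
Proof.
  intros Hd Hm HK. unfold Q, B. pose proof (multinom_pos (repeat m d)).
  apply (Rmult_le_reg_r (multinom (repeat m d))); [lra|].
  replace (sum_tuples (repeat m d) multinom / multinom (repeat m d) * multinom (repeat m d))
    with (sum_tuples (repeat m d) multinom) by (field; lra).
  rewrite <- (geom_sum_truncated _ m K HK), <- sum_tuples_prod_repeat, <- sum_tuples_scal.
  apply sum_tuples_le. intros t Ht. apply tuple_lower; auto.
Qed.

(* Summing tuple_upper over the box, with geom_sum y m <= y/(1-y) and
   geom_sum (3/4) m <= 3. *)
Lemma Q_upper (d m K : nat) : (2 <= d)%nat -> (1 <= m)%nat -> (K < m)%nat ->
  Q d m <= ((INR m / INR (d * m - K)) / (1 - INR m / INR (d * m - K))) ^ d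
           + 3 / 2 * (8 / 9) ^ K * 3 ^ d.
Proof.
  intros Hd Hm HK. unfold Q, B. pose proof (multinom_pos (repeat m d)).
  set (y := INR m / INR (d * m - K)).
  assert (Hy : 0 <= y < 1).
  { assert (INR m < INR (d * m - K)) by (apply lt_INR; nia).
    pose proof (lt_0_INR m Hm). unfold y. split.
    - apply Rlt_le, Rdiv_lt_0_compat; lra.
    - apply (Rmult_lt_reg_r (INR (d * m - K))); [lra|]. field_simplify; lra. }
  apply (Rmult_le_reg_r (multinom (repeat m d))); [lra|].
  replace (sum_tuples (repeat m d) multinom / multinom (repeat m d) * multinom (repeat m d))
    with (sum_tuples (repeat m d) multinom) by (field; lra).
  eapply Rle_trans; [apply sum_tuples_le; intros t Ht; apply (tuple_upper d m K t); auto|].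
  rewrite sum_tuples_scal. apply Rmult_le_compat_r; [lra|]. fold y.
  rewrite (sum_tuples_ext _ _ (fun t => prodR (fun l => y ^ (m - l)) t
             + prodR (fun l => (3 / 4) ^ (m - l)) t * (3 / 2 * (8 / 9) ^ K)))
    by (intros; ring).
  rewrite sum_tuples_plus, sum_tuples_scal, !sum_tuples_prod_repeat.
  change (sumL (fun l => ?c ^ (m - l)) (seq 0 m)) with (geom_sum c m).
  assert (geom_sum y m ^ d <= (y / (1 - y)) ^ d).
  { apply pow_incr. split; [apply geom_sum_nonneg; lra | apply geom_sum_bound; lra]. }
  assert (geom_sum (3 / 4) m ^ d <= 3 ^ d).
  { apply pow_incr. split; [apply geom_sum_nonneg; lra|].
    replace 3 with ((3 / 4) / (1 - 3 / 4)) at 2 by field. apply geom_sum_bound; lra. }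
  assert (0 <= 3 / 2 * (8 / 9) ^ K) by (apply Rmult_le_pos; [lra | apply pow_le; lra]).
  nra.
Qed.

(* A sequence squeezed, for every truncation level K, between sequences whose
   limits tend to L as K grows, tends to L: this discrete dominated convergence is how the
   two bounds on Q are combined. *)
Lemma squeeze_truncation (q : nat -> R) (lo hi : nat -> nat -> R) (Lo Hi : nat -> R) (L : R) :
  (forall K, eventually (fun m => lo K m <= q m <= hi K m)) ->
  (forall K, is_lim_seq (lo K) (Lo K)) -> (forall K, is_lim_seq (hi K) (Hi K)) ->
  is_lim_seq Lo L -> is_lim_seq Hi L -> is_lim_seq q L.
Proof.
  intros Hsq Hlo Hhi HLo HHi. apply is_lim_seq_spec. intros eps.
  assert (He : 0 < eps / 2) by (destruct eps; simpl; lra).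
  set (e := mkposreal _ He).
  apply is_lim_seq_spec in HLo, HHi.
  destruct (filter_and _ _ (HLo e) (HHi e)) as [K HK].
  destruct (HK K (le_n K)) as [HLoK HHiK].
  pose proof (proj2 (is_lim_seq_spec _ _) (Hlo K) e) as Hl.
  pose proof (proj2 (is_lim_seq_spec _ _) (Hhi K) e) as Hh.
  generalize (filter_and _ _ (Hsq K) (filter_and _ _ Hl Hh)). apply filter_imp.
  intros m [[S1 S2] [A B]]. simpl in *.
  apply Rabs_def2 in HLoK, HHiK, A, B. apply Rabs_def1; lra.
Qed.

Lemma is_lim_seq_pow (u : nat -> R) (l : R) (k : nat) :
  is_lim_seq u l -> is_lim_seq (fun n => u n ^ k) (l ^ k).
Proof.
  intros H. induction k as [|k IH]; simpl; [apply is_lim_seq_const|].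
  apply is_lim_seq_mult'; auto.
Qed.

(* geom_sum is a polynomial in c, hence continuous. *)
Lemma is_lim_seq_geom_sum (u : nat -> R) (l : R) (K : nat) :
  is_lim_seq u l -> is_lim_seq (fun n => geom_sum (u n) K) (geom_sum l K).
Proof.
  intros H. induction K as [|K IH].
  - apply is_lim_seq_const.
  - apply (is_lim_seq_ext (fun n => u n * (geom_sum (u n) K + 1))).
    { intros n. symmetry. apply geom_sum_S. }
    rewrite geom_sum_S. apply is_lim_seq_mult'; [exact H|].
    apply is_lim_seq_plus'; [exact IH | apply is_lim_seq_const].
Qed.

Lemma is_lim_seq_sub_inv (a b : R) : is_lim_seq (fun n => a - b * / INR n) a.
Proof.
  replace (Finite a) with (Finite (a - b * 0)) by (f_equal; ring).
  apply is_lim_seq_minus'; [apply is_lim_seq_const|].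
  apply (is_lim_seq_scal_l _ b 0), is_lim_seq_inv_INR.
Qed.

Section QLimit.
Variable d : nat.
Hypothesis Hd : (2 <= d)%nat.

Let c : R := / INR d.

Lemma c_bounds : 0 < c < 1.
Proof.
  unfold c. assert (2 <= INR d) by (apply (le_INR 2); lia).
  split; [apply Rinv_0_lt_compat; lra|]. rewrite <- Rinv_1. apply Rinv_lt_contravar; lra.
Qed.

Lemma lower_ratio_limit (K : nat) : is_lim_seq (fun m => INR (m - K) / INR (d * m)) c.
Proof.
  apply (is_lim_seq_ext_loc (fun m => c - INR K * c * / INR m)); [|apply is_lim_seq_sub_inv].
  exists (S K). intros m Hm. rewrite minus_INR, mult_INR by lia. unfold c.
  assert (0 < INR m) by (apply lt_0_INR; lia). assert (0 < INR d) by (apply lt_0_INR; lia).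
  field. lra.
Qed.

Lemma upper_ratio_limit (K : nat) :
  is_lim_seq (fun m => (INR m / INR (d * m - K)) / (1 - INR m / INR (d * m - K)))
             (c / (1 - c)).
Proof.
  pose proof c_bounds. assert (2 <= INR d) by (apply (le_INR 2); lia).
  assert (Hy : is_lim_seq (fun m => INR m / INR (d * m - K)) c).
  { apply (is_lim_seq_ext_loc (fun m => / (INR d - INR K * / INR m))).
    - exists (S K). intros m Hm. assert (0 < INR m) by (apply lt_0_INR; lia).
      assert (INR K < INR m) by (apply lt_INR; lia).
      rewrite minus_INR, mult_INR by nia.
      replace (INR d - INR K * / INR m) with ((INR d * INR m - INR K) / INR m)
        by (field; lra).
      assert (INR K < INR d * INR m) by nra.
      field. lra.
    - apply (is_lim_seq_inv _ (INR d)); [apply is_lim_seq_sub_inv|].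
      intros E; injection E; lra. }
  apply is_lim_seq_div'; [exact Hy | | lra].
  apply is_lim_seq_minus'; [apply is_lim_seq_const | exact Hy].
Qed.

(* Q(m) -> (c/(1-c))^d: both truncated bounds tend, as m -> oo, to limits that tend
   to (c/(1-c))^d as K -> oo, the tail of the upper bound being O((8/9)^K). *)
Lemma Q_limit : is_lim_seq (Q d) ((c / (1 - c)) ^ d).
Proof.
  pose proof c_bounds.
  apply (squeeze_truncation (Q d)
    (fun K m => geom_sum (INR (m - K) / INR (d * m)) K ^ d)
    (fun K m => ((INR m / INR (d * m - K)) / (1 - INR m / INR (d * m - K))) ^ d
                + 3 / 2 * (8 / 9) ^ K * 3 ^ d)
    (fun K => geom_sum c K ^ d)
    (fun K => (c / (1 - c)) ^ d + 3 / 2 * (8 / 9) ^ K * 3 ^ d)).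
  - intros K. exists (S K). intros m Hm.
    split; [apply Q_lower | apply Q_upper]; lia.
  - intros K. apply is_lim_seq_pow, is_lim_seq_geom_sum, lower_ratio_limit.
  - intros K. apply is_lim_seq_plus'; [|apply is_lim_seq_const].
    apply is_lim_seq_pow, upper_ratio_limit.
  - apply is_lim_seq_pow.
    apply (is_lim_seq_ext (fun K => c / (1 - c) - c / (1 - c) * c ^ K)).
    { intros K. rewrite geom_sum_closed by lra. field. lra. }
    replace (Finite (c / (1 - c))) with (Finite (c / (1 - c) - c / (1 - c) * 0))
      by (f_equal; ring).
    apply is_lim_seq_minus'; [apply is_lim_seq_const|].
    apply (is_lim_seq_scal_l _ _ 0), is_lim_seq_geom. rewrite Rabs_right; lra.
  - replace (Finite ((c / (1 - c)) ^ d))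
      with (Finite ((c / (1 - c)) ^ d + 3 / 2 * 0 * 3 ^ d)) by (f_equal; ring).
    apply is_lim_seq_plus'; [apply is_lim_seq_const|].
    apply is_lim_seq_mult'; [|apply is_lim_seq_const].
    apply (is_lim_seq_scal_l _ _ 0), is_lim_seq_geom. rewrite Rabs_right; lra.
Qed.

End QLimit.

Theorem mainTheorem17 (S : nat) (HS : (2 <= S)%nat) :
  Un_cv
    (fun m : nat =>
       B (repeat m S) /
       (Rpower (INR S) (INR (S * m) + / 2) /
        (Rpower (2 * PI * INR m) ((INR S - 1) / 2) * (INR S - 1) ^ S)))
    1.
Proof.
  assert (HSR : 2 <= INR S) by (apply (le_INR 2); lia).
  apply is_lim_seq_Reals.
  apply (is_lim_seq_ext (fun m => Q S m * (INR S - 1) ^ S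
           * (multinom (repeat m S) * Rpower (2 * PI * INR m) ((INR S - 1) / 2)
              / Rpower (INR S) (INR (S * m) + / 2)))).
  { intros m. unfold Q, Rpower. pose proof (multinom_pos (repeat m S)).
    pose proof (exp_pos ((INR (S * m) + / 2) * ln (INR S))).
    pose proof (exp_pos ((INR S - 1) / 2 * ln (2 * PI * INR m))).
    assert (0 < (INR S - 1) ^ S) by (apply pow_lt; lra).
    field. repeat split; lra. }
  replace (Finite 1) with (Finite ((/ INR S / (1 - / INR S)) ^ S * (INR S - 1) ^ S * 1)).
  2: { f_equal. rewrite <- Rpow_mult_distr.
       replace (/ INR S / (1 - / INR S) * (INR S - 1)) with 1 by (field; lra).
       rewrite pow1. ring. }
  apply is_lim_seq_mult'; [|apply central_multinom_asymptotic; lia].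
  apply is_lim_seq_mult'; [apply Q_limit, HS | apply is_lim_seq_const].
Qed.
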